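(* Let $i\in\{1,2\}$ and let \[ F_i(x,q)=\sum_{\lambda\in\mathcal{S}}x^{\ell(\lambda)}q^{|\lambda|_i}, \] where $\mathcal{S}$ is the set of strict partitions. Then \[ q^{3}F_i(x,q) = (1+q^{3}-xq^{3}+xq^{6}+x^{2}q^{7}+x^{2}q^{8})\,F_i(xq^{3},q) -(1-xq^3)(1+xq^6)(1-x^2q^9)\,F_i(xq^{6},q). \]
   Context: A strict partition is a partition with distinct parts (including the empty partition); $\ell(\lambda)$ denotes its number of parts (rows). Identify $\lambda$ with its Young diagram; the box in row $j$ and column $k$ has residue $k-j \bmod 2$. For $i\in\{1,2\}$, $|\lambda|_i$ is the number of boxes of $\lambda$, where boxes whose residue is congruent to $i$ modulo $2$ are counted twice (so for $i=1$ boxes with $k-j$ odd count twice, for $i=2$ boxes with $k-j$ even count twice). *)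

From mathcomp Require Import all_boot all_order all_algebra.
Set Implicit Arguments. Unset Strict Implicit. Unset Printing Implicit Defensive.
Import GRing.Theory.
Local Open Scope ring_scope.

(* A strict partition is a strictly decreasing sequence of positive parts
   (row j+1 of the Young diagram has length nth 0 s j). *)
Definition strict (s : seq nat) : bool := sorted gtn s && all (fun p => 0 < p)%N s.

(* sp m : all strictly decreasing sequences of integers in {1..m}
   (each exactly once), i.e. all strict partitions with largest part <= m. *)
Fixpoint sp (m : nat) : seq (seq nat) :=
  match m with
  | 0 => [:: [::]]
  | m'.+1 => sp m' ++ [seq m'.+1 :: s | s <- sp m']
  end.

(* |lambda|_i : boxes (j,k) (row j, column k, 1-indexed) counted twice when
   k - j = i (mod 2), i.e. when odd (k + j) == odd i. *)
Definition wt (i : nat) (s : seq nat) : nat :=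
  (\sum_(j0 < size s) \sum_(1 <= k < (nth 0 s j0).+1)
     (if odd (k + j0.+1) == odd i then 2 else 1))%N.

(* Formal power series in q with coefficients in Z[x]:  nat -> {poly int}. *)
Definition series := nat -> {poly int}.

(* Since |lambda| <= |lambda|_i, every strict partition with |lambda|_i = n
   has largest part <= n, hence occurs in sp n. *)
Definition Fcoef (i : nat) : series :=
  fun n => \sum_(s <- sp n | strict s && (wt i s == n)) 'X^(size s).

(* Coefficients of G(x q^k, q) where G is the series f. *)
Definition subst_xq (k : nat) (f : series) : series :=
  fun n => \sum_(m < n.+1) \sum_(a < size (f m) | (m + k * a == n)%N)
             ((f m)`_a)%:P * 'X^a.

(* Product of a polynomial P in q (outer variable) with coefficients in Z[x]
   (inner variable) by a series f. *)
Definition mulser (P : {poly {poly int}}) (f : series) : series :=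
  fun n => \sum_(j < n.+1) P`_j * f (n - j)%N.

Definition xx : {poly {poly int}} := ('X : {poly int})%:P.
Definition qq : {poly {poly int}} := 'X.

Definition polyA5 : {poly {poly int}} :=
  1 + qq ^+ 3 - xx * qq ^+ 3 + xx * qq ^+ 6 + xx ^+ 2 * qq ^+ 7 + xx ^+ 2 * qq ^+ 8.
Definition polyB5 : {poly {poly int}} :=
  (1 - xx * qq ^+ 3) * (1 + xx * qq ^+ 6) * (1 - xx ^+ 2 * qq ^+ 9).

From mathcomp Require Import all_boot all_order all_algebra.
From mathcomp Require Import ring zify.
Import GRing.Theory.
Local Open Scope ring_scope.

(* Let P_i(N) ([Fpoly i N]) be the generating polynomial of the strict
   partitions with parts at most N.  Deleting the first row of a partition moves every other row up
   by one, which flips the parity of the weighting, so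
   P_i(N+1) = P_i(N) + x q^(c_i(N+1)) P_(i+1)(N), where c_i(h) is the weight
   of a first row of length h and c_i(h+2) = c_i(h) + 3.  Since x |-> x q^k is
   a ring morphism, the identity q^3 P_i(N+4) = A P_i(N+2)(xq^3) - B P_i(N)(xq^6)
   then passes from N (for both parities) to N+1, and for N = 0 it is a finite
   computation.  As P_i(N) agrees with F_i up to q^N, comparing coefficients
   gives the theorem. *)

Definition row_wt (i h : nat) : nat := (h + (if odd i then h./2 else h.+1./2))%N.

Lemma row_wtE i h :
  (\sum_(1 <= k < h.+1) (if odd (k + 1) == odd i then 2 else 1))%N = row_wt i h.
Proof.
elim: h => [|h IH]; first by rewrite big_geq // /row_wt; case: (odd i).
rewrite big_nat_recr // IH /row_wt addn1 /= negbK uphalf_half.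
by case: (odd i); case: (odd h) => /=; lia.
Qed.

Lemma row_wtSS i h : row_wt i h.+2 = (row_wt i h + 3)%N.
Proof. by rewrite /row_wt /=; case: (odd i); lia. Qed.

Lemma leq_row_wt i h : (h <= row_wt i h)%N.
Proof. exact: leq_addr. Qed.

Lemma wt_nil i : wt i [::] = 0%N.
Proof. by rewrite /wt big_ord0. Qed.

Lemma wt_cons i h s : wt i (h :: s) = (row_wt i h + wt i.+1 s)%N.
Proof.
rewrite /wt big_ord_recl /= -row_wtE; congr addn.
apply: eq_bigr => j _; apply: eq_bigr => k _.
by rewrite /bump /= add1n addnS oddS; case: (odd (k + j.+1)); case: (odd i).
Qed.

Lemma eq_wt i j s : odd i = odd j -> wt i s = wt j s.
Proof. by rewrite /wt => ->. Qed.

Lemma mem_sp_strict N s : s \in sp N -> strict s && all (fun p => p <= N)%N s.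
Proof.
elim: N s => [|N IH] s /=; first by rewrite inE => /eqP ->.
rewrite mem_cat => /orP [/IH /andP [-> le_sN]|/mapP [t /IH /andP [st le_tN] ->]].
  by apply: sub_all le_sN => p /leqW.
move: st; rewrite /strict /= => /andP [sorted_t pos_t].
rewrite pos_t andbT leqnn /=; apply/andP; split; last by apply: sub_all le_tN => p /leqW.
by case: t sorted_t le_tN {pos_t} => [|y t] //= -> /andP [le_yN _]; rewrite andbT /gtn /= ltnS.
Qed.

Definition Fpoly (i N : nat) : {poly {poly int}} :=
  \sum_(s <- sp N) xx ^+ size s * qq ^+ wt i s.

Lemma Fpoly0 i : Fpoly i 0 = 1.
Proof. by rewrite /Fpoly /= big_cons big_nil wt_nil !expr0 mulr1 addr0. Qed.

Lemma FpolyS i N : Fpoly i N.+1 = Fpoly i N + xx * qq ^+ row_wt i N.+1 * Fpoly i.+1 N.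
Proof.
rewrite /Fpoly /= big_cat big_map /=; congr (_ + _).
by rewrite mulr_sumr; apply: eq_bigr => s _; rewrite wt_cons exprS exprD; ring.
Qed.

Lemma eq_Fpoly i j N : odd i = odd j -> Fpoly i N = Fpoly j N.
Proof. by move=> ij; apply: eq_bigr => s _; rewrite (@eq_wt _ _ s ij). Qed.

Lemma coef_Fpoly i N m : (Fpoly i N)`_m = \sum_(s <- sp N | wt i s == m) 'X^(size s).
Proof.
rewrite /Fpoly coef_sum [RHS]big_mkcond /=; apply: eq_bigr => s _.
by rewrite /xx -rmorphXn coefCM /qq coefXn mulr_natr mulrb eq_sym; case: (_ == _).
Qed.

Lemma Fcoef_Fpoly i m N : (m <= N)%N -> Fcoef i m = (Fpoly i N)`_m.
Proof.
move=> le_mN; rewrite coef_Fpoly /Fcoef.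
have -> : \sum_(s <- sp m | strict s && (wt i s == m)) ('X^(size s) : {poly int}) =
          \sum_(s <- sp m | wt i s == m) 'X^(size s).
  rewrite big_seq_cond [RHS]big_seq_cond; apply: eq_bigl => s.
  by case sp_s: (s \in sp m) => //=; case/andP: (mem_sp_strict _ _ sp_s) => ->.
rewrite -(subnKC le_mN); elim: (N - m)%N => [|d IH]; first by rewrite addn0.
rewrite addnS /= big_cat /= IH big_map [X in _ + X]big1 ?addr0 // => s.
by rewrite wt_cons => /eqP wt_s; have := leq_row_wt i (m + d).+1; lia.
Qed.

(* [subst_xq_coef k c] is [c(x q^k)] for [c] in Z[x], by Horner evaluation. *)
Definition subst_xq_coef k : {rmorphism {poly int} -> {poly {poly int}}} :=
  horner_eval (xx * qq ^+ k) \o map_poly (polyC \o polyC).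

Definition subst_xq_poly k : {rmorphism {poly {poly int}} -> {poly {poly int}}} :=
  horner_eval qq \o map_poly (subst_xq_coef k).

Lemma subst_xq_poly_x k : subst_xq_poly k xx = xx * qq ^+ k.
Proof. by rewrite /= map_polyC /= map_polyX /horner_eval hornerC hornerX. Qed.

Lemma subst_xq_poly_q k : subst_xq_poly k qq = qq.
Proof. by rewrite /= map_polyX /horner_eval hornerX. Qed.

Lemma subst_xq_coefE k c :
  subst_xq_coef k c = \sum_(a < size c) ((c`_a)%:P * 'X^a)%:P * 'X^(k * a).
Proof.
rewrite /= /horner_eval (horner_coef_wide _ (size_poly _ _)).
apply: eq_bigr => a _; rewrite coef_map_id0 //=.
by rewrite exprMn /xx /qq -exprM -rmorphXn rmorphM /= mulrA mulnC.
Qed.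

Lemma subst_xqE k (f : series) (G : {poly {poly int}}) n :
  (forall m, (m <= n)%N -> f m = G`_m) -> subst_xq k f n = (subst_xq_poly k G)`_n.
Proof.
move=> fG; rewrite -[subst_xq_poly k G]/((map_poly (subst_xq_coef k) G).[qq]).
rewrite (@horner_coef_wide _ (n.+1 + size G)); last exact: leq_trans (size_poly _ _) (leq_addl _ _).
rewrite coef_sum big_split_ord /= [X in _ + X]big1 ?addr0; last first.
  by move=> m _; rewrite /qq coefMXn ltnS leq_addr.
apply: eq_bigr => m _; have le_mn : (m <= n)%N by rewrite -ltnS ltn_ord.
rewrite coef_map_id0 ?rmorph0 // /qq coefMXn ltnNge le_mn.
rewrite subst_xq_coefE coef_sum -fG // big_mkcond /=; apply: eq_bigr => a _.
rewrite coefCM coefXn mulr_natr mulrb.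
by have -> : (n - m == k * a)%N = (m + k * a == n)%N by apply/eqP/eqP; lia.
Qed.

Lemma mulserE (P G : {poly {poly int}}) (f : series) n :
  (forall m, (m <= n)%N -> f m = G`_m) -> mulser P f n = (P * G)`_n.
Proof. by move=> fG; rewrite /mulser coefM; apply: eq_bigr => j _; rewrite fG // leq_subr. Qed.

Notation subst_xq_rules :=
  (rmorphD, rmorphB, rmorphM, rmorphXn, rmorph1, subst_xq_poly_x, subst_xq_poly_q).

Lemma Fpoly_functional_eq0 i :
  qq ^+ 3 * Fpoly i 4 =
    polyA5 * subst_xq_poly 3 (Fpoly i 2) - polyB5 * subst_xq_poly 6 (Fpoly i 0).
Proof.
have [par_i|par_i] := boolP (odd i);
  [rewrite !(@eq_Fpoly i 1) ?par_i // | rewrite !(@eq_Fpoly i 2) ?(negbTE par_i) //];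
  by rewrite !FpolyS !Fpoly0 !subst_xq_rules /row_wt /= /polyA5 /polyB5; ring.
Qed.

Lemma Fpoly_functional_eq i N :
  qq ^+ 3 * Fpoly i (N + 4) =
    polyA5 * subst_xq_poly 3 (Fpoly i (N + 2)) - polyB5 * subst_xq_poly 6 (Fpoly i N).
Proof.
elim: N i => [|N IH] i; first exact: Fpoly_functional_eq0.
have wt4 : row_wt i (N + 4).+1 = (row_wt i N.+1 + 6)%N.
  by rewrite (_ : (N + 4).+1 = N.+1.+2.+2) ?row_wtSS; lia.
have wt2 : row_wt i (N + 2).+1 = (row_wt i N.+1 + 3)%N.
  by rewrite (_ : (N + 2).+1 = N.+1.+2) ?row_wtSS; lia.
rewrite !addSn !FpolyS wt4 wt2 !subst_xq_rules; set c := row_wt i N.+1.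
have -> : qq ^+ 3 * (Fpoly i (N + 4) + xx * qq ^+ (c + 6) * Fpoly i.+1 (N + 4)) =
    qq ^+ 3 * Fpoly i (N + 4) + xx * qq ^+ c * qq ^+ 6 * (qq ^+ 3 * Fpoly i.+1 (N + 4)).
  by rewrite exprD; ring.
by rewrite !IH !exprD; ring.
Qed.

Theorem mainTheorem5 (i : nat) (hi : i = 1%N \/ i = 2%N) (n : nat) :
  mulser (qq ^+ 3) (Fcoef i) n =
    mulser polyA5 (subst_xq 3 (Fcoef i)) n - mulser polyB5 (subst_xq 6 (Fcoef i)) n.
Proof.
rewrite (@mulserE _ (Fpoly i (n + 4))); last by move=> m le_mn; apply: Fcoef_Fpoly; lia.
rewrite (@mulserE _ (subst_xq_poly 3 (Fpoly i (n + 2)))); last first.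
  by move=> m le_mn; apply: subst_xqE => m' le_m'm; apply: Fcoef_Fpoly; lia.
rewrite (@mulserE _ (subst_xq_poly 6 (Fpoly i n))); last first.
  by move=> m le_mn; apply: subst_xqE => m' le_m'm; apply: Fcoef_Fpoly; lia.
by rewrite -coefB Fpoly_functional_eq.
Qed.
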